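(* Let $M$ be a pure motive over $\mathbf{Q}$, let $i\le 2n-1$ be integers, and let $V=H^i_B(M_{\mathbf{C}},\mathbf{Q})$ with its pure $\mathbf{Q}$-Hodge structure of weight $i$, Betti conjugation $c_B$, involution $F_\infty$ and Hodge filtration $F^\bullet$ on $V_{\mathbf{C}}=H^i_{\mathrm{dR}}(M)\otimes\mathbf{C}$. Let $S:V\times V\to (2\pi\sqrt{-1})^{-i}\mathbf{Q}$ be a nondegenerate $(-1)^i$-symmetric bilinear form whose complex-bilinear extension is invariant under $F_\infty$ and under the action of $\mathbf{C}^\times$ (acting on $V^{p,q}$ by $z\mapsto z^p\bar z^q$), and which restricts to a $\mathbf{Q}$-valued form on $H^i_{\mathrm{dR}}(M)$; put $Q=(2\pi\sqrt{-1})^iS$, a $\mathbf{Q}$-valued form on $V$. Define the bilinear form $(u,v):=Q(u,c_B v)$ on $H^i_B(M_{\mathbf{R}},\mathbf{R}(n-1))$. Then: (1) $(\cdot,\cdot)$ is $\mathbf{R}$-valued. (2) If $i$ is even, $(\cdot,\cdot)$ is symmetric and nondegenerate, and its restriction to the subspace $\tilde\pi_{n-1}(F^nH^i_{\mathrm{dR}}(M_{\mathbf{R}}))$ is nondegenerate; in particular it induces, by identifying $H^{i+1}_{\mathcal D}(M_{\mathbf{R}},\mathbf{R}(n))$ with the orthogonal complement of that subspace, a nondegenerate form on $H^{i+1}_{\mathcal D}(M_{\mathbf{R}},\mathbf{R}(n))$. (3) If $i=2n-2$ and $S$ arises from a polarization (i.e. moreover $\sqrt{-1}^{\,p-q}Q(u,c_Bu)>0$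 for all nonzero $u\in V^{p,q}$), then the induced form on $H^{i+1}_{\mathcal D}(M_{\mathbf{R}},\mathbf{R}(n))$ is symmetric and positive definite.
   Context: For a motive $M$ over $\mathbf{Q}$: $V_{\mathbf{C}}=H^i_B(M_{\mathbf{C}},\mathbf{Q})\otimes\mathbf{C}$ is identified with $H^i_{\mathrm{dR}}(M)\otimes\mathbf{C}$ by the comparison isomorphism; $c_B$ is complex conjugation on the coefficients of $V_{\mathbf{C}}$, $F_\infty$ is the $\mathbf{C}$-linear involution induced by complex conjugation on the points of $M$ over $\mathbf{C}$, and $c_{\mathrm{dR}}=F_\infty c_B$ is complex conjugation with respect to $H^i_{\mathrm{dR}}(M)$. For a subring $A\subset\mathbf{C}$ stable under conjugation, $\mathbf{R}(j)=(2\pi\sqrt{-1})^j\mathbf{R}$, and $H^i_B(M_{\mathbf{R}},A)$ denotes the subspace of $H^i_B(M_{\mathbf{C}},A)$ fixed by $F_\infty c_B$; thus $H^i_B(M_{\mathbf{R}},\mathbf{R}(n-1))=\{v\in V_{\mathbf{C}}: c_Bv=F_\infty v=(-1)^{n-1}v\}$. $F^nH^i_{\mathrm{dR}}(M_{\mathbf{R}})=F^nH^i_{\mathrm{dR}}(M)\otimes\mathbf{R}$ (the step of the Hodge filtration on real de Rham cohomology), viewed inside $H^i_B(M_{\mathbf{R}},\mathbf{C})$, and $\tilde\pi_{n-1}:F^nH^i_{\mathrm{dR}}(M_{\mathbf{R}})\to H^i_B(M_{\mathbf{R}},\mathbf{R}(n-1))$ is the projection along $\mathbf{C}=\mathbf{R}(n)\oplus\mathbf{R}(n-1)$,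 i.e. $x\mapsto \tfrac12(x+(-1)^{n-1}c_Bx)$; it is injective and its cokernel is the Deligne cohomology $H^{i+1}_{\mathcal D}(M_{\mathbf{R}},\mathbf{R}(n))$. *)

From HB Require Import structures.
From mathcomp Require Import all_boot all_order all_algebra.
From mathcomp Require Import complex.
From mathcomp Require Import reals trigo.
Set Implicit Arguments. Unset Strict Implicit. Unset Printing Implicit Defensive.
Import Order.TTheory GRing.Theory Num.Theory.
Local Open Scope ring_scope.
Local Open Scope complex_scope.

(* The complex numbers are C := R[i] for R : realType; V_C := 'rV[C]_d
   (row vectors; linear maps act on the right, v *m A). *)

Definition tpi (R : realType) : R[i] := (2 * pi)%:C * (Complex 0 1).

Definition RatC (R : rcfType) (x : R[i]) : Prop := exists q : rat, x = ratr q.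

(* c_B : complex conjugation of the coefficients *)
Definition conjv (R : rcfType) (m n : nat) (v : 'M[R[i]]_(m, n)) :
  'M[R[i]]_(m, n) := map_mx (fun x => x^*) v.

Definition bil (K : comNzRingType) (d : nat) (M : 'M[K]_d) (u v : 'rV[K]_d) : K :=
  (u *m M *m v^T) 0 0.

(* Hodge decomposition given by an adapted basis B (rows) and types:
   row k of B lies in V^{hp k, i - hp k}. *)
Definition Vpq (K : nzRingType) (d : nat) (hp : 'I_d -> int) (B : 'M[K]_d)
  (p : int) : 'M[K]_d :=
  \matrix_(k < d) (if hp k == p then row k B else 0).

Definition Fil (K : nzRingType) (d : nat) (hp : 'I_d -> int) (B : 'M[K]_d)
  (p : int) : 'M[K]_d :=
  \matrix_(k < d) (if (p <= hp k)%R then row k B else 0).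

Definition hact (R : rcfType) (d : nat) (i : int) (hp : 'I_d -> int)
  (B : 'M[R[i]]_d) (z : R[i]) : 'M[R[i]]_d :=
  invmx B *m diag_mx (\row_k (z ^ hp k * z^* ^ (i - hp k))) *m B.

Definition Rspan (R : rcfType) (d : nat) (P : 'rV[R[i]]_d -> Prop)
  (v : 'rV[R[i]]_d) : Prop :=
  exists (m : nat) (r : 'I_m -> R) (w : 'I_m -> 'rV[R[i]]_d),
    (forall k, P (w k)) /\ v = \sum_(k < m) (r k)%:C *: w k.

(* H^i_B(M_R, R(n-1)) = { v : c_B v = F_inf v = (-1)^(n-1) v } *)
Definition HBR (R : rcfType) (d : nat) (n : int) (Finf : 'M[R[i]]_d)
  (v : 'rV[R[i]]_d) : Prop :=
  conjv v = (-1) ^ (n - 1) *: v /\ v *m Finf = (-1) ^ (n - 1) *: v.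

(* H^i_dR(M) = Q-span of the rows of D *)
Definition VdR (R : rcfType) (d : nat) (D : 'M[R[i]]_d) (w : 'rV[R[i]]_d) : Prop :=
  exists y : 'rV[rat]_d, w = map_mx ratr y *m D.

(* F^n H^i_dR(M_R) = (F^n H^i_dR(M)) (x) R, inside V_C *)
Definition FdRR (R : rcfType) (d : nat) (hp : 'I_d -> int) (B D : 'M[R[i]]_d)
  (n : int) : 'rV[R[i]]_d -> Prop :=
  Rspan (fun w => (w <= Fil hp B n)%MS /\ VdR D w).

Definition pitilde (R : rcfType) (d : nat) (n : int) (x : 'rV[R[i]]_d) : 'rV[R[i]]_d :=
  2^-1 *: (x + (-1) ^ (n - 1) *: conjv x).

Definition Wsub (R : rcfType) (d : nat) (hp : 'I_d -> int) (B D : 'M[R[i]]_d)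
  (n : int) (v : 'rV[R[i]]_d) : Prop :=
  exists x, FdRR hp B D n x /\ v = pitilde n x.

Definition imC (R : rcfType) : R[i] := Complex 0 1.

(* Put eps = (-1)^(n-1).  On H_B(M_R, R(n-1)) one has c_B v = eps v = F_inf v, so
   (u, v) = eps Q(u, v): it is real because Q is, and symmetric when i is even.
   Its complexification is the eps-eigenspace of the Q-isometry F_inf: every vector
   y there is pi~ y + sqrt(-1) pi~(-sqrt(-1) y), both terms lying in
   H_B(M_R, R(n-1)), which reduces nondegeneracy to that of Q.  By C^x-invariance Q
   pairs V^{p,i-p} only with V^{i-p,p}, so an eps-eigenvector orthogonal to F^n,
   hence also to F_inf F^n, has all its Hodge components in the middle range
   i-n < p < n, while pi~(F^n) has none there.  This gives nondegeneracy on pi~(F^n)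
   and on its orthogonal complement; for i = 2n-2 the complement lies in
   V^{n-1,n-1}, where the polarization makes the form positive. *)

From HB Require Import structures.
From mathcomp Require Import all_boot all_order all_algebra.
From mathcomp Require Import complex.
From mathcomp Require Import reals trigo.
From mathcomp Require Import ring zify.
Set Implicit Arguments. Unset Strict Implicit. Unset Printing Implicit Defensive.
Import Order.TTheory GRing.Theory Num.Theory.
Local Open Scope ring_scope.

Section Bilinear.
Variables (K : comNzRingType) (d : nat).
Implicit Types (M : 'M[K]_d) (u v w : 'rV[K]_d).

Lemma bilDl M u v w : bil M (u + v) w = bil M u w + bil M v w.
Proof. by rewrite /bil !mulmxDl mxE. Qed.

Lemma bilDr M u v w : bil M u (v + w) = bil M u v + bil M u w.
Proof. by rewrite /bil linearD /= mulmxDr mxE. Qed.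

Lemma bilZl M a u v : bil M (a *: u) v = a * bil M u v.
Proof. by rewrite /bil -!scalemxAl mxE. Qed.

Lemma bilZr M a u v : bil M u (a *: v) = a * bil M u v.
Proof. by rewrite /bil linearZ /= -scalemxAr mxE. Qed.

Lemma bilZm M a u v : bil (a *: M) u v = a * bil M u v.
Proof. by rewrite /bil -scalemxAr -scalemxAl mxE. Qed.

Lemma bil0l M v : bil M 0 v = 0.
Proof. by rewrite /bil !mul0mx mxE. Qed.

Lemma bil0r M u : bil M u 0 = 0.
Proof. by rewrite /bil trmx0 mulmx0 mxE. Qed.

Lemma bil_suml M v (I : Type) (r : seq I) (P : pred I) (f : I -> 'rV[K]_d) :
  bil M (\sum_(k <- r | P k) f k) v = \sum_(k <- r | P k) bil M (f k) v.
Proof. by elim/big_rec2: _ => [|k x y _ <-]; rewrite ?bil0l ?bilDl. Qed.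

Lemma bil_sumr M u (I : Type) (r : seq I) (P : pred I) (f : I -> 'rV[K]_d) :
  bil M u (\sum_(k <- r | P k) f k) = \sum_(k <- r | P k) bil M u (f k).
Proof. by elim/big_rec2: _ => [|k x y _ <-]; rewrite ?bil0r ?bilDr. Qed.

Lemma bil_map (K' : comNzRingType) (f : {rmorphism K -> K'}) M u v :
  f (bil M u v) = bil (map_mx f M) (map_mx f u) (map_mx f v).
Proof. by rewrite /bil map_trmx -!map_mxM [in RHS]mxE. Qed.

End Bilinear.

Section Nondegenerate.
Variables (K : fieldType) (d : nat).
Implicit Types (M : 'M[K]_d) (u v : 'rV[K]_d).

Lemma bil_nondegenerate_unitmx M :
  (forall u, (forall v, bil M u v = 0) -> u = 0) -> M \in unitmx.
Proof.
move=> nondeg; rewrite -row_free_unit; apply: inj_row_free => u uM.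
by apply: nondeg => v; rewrite /bil uM mul0mx mxE.
Qed.

Lemma unitmx_bil_nondegenerate M u :
  M \in unitmx -> (forall v, bil M u v = 0) -> u = 0.
Proof.
move=> Munit uM; apply/eqP; rewrite -(mulmx_free_eq0 _ (_ : row_free M)) ?row_free_unit //.
apply/eqP/rowP => j; have := uM (delta_mx 0 j).
by rewrite /bil trmx_delta -colE !mxE.
Qed.

End Nondegenerate.

Section Conjugation.
Variable R : rcfType.
Local Notation C := R[i].
Variables m n : nat.
Implicit Types A : 'M[C]_(m, n).

Lemma conjvD A A' : conjv (A + A') = conjv A + conjv A'.
Proof. exact: map_mxD. Qed.

Lemma conjvZ a A : conjv (a *: A) = a^* *: conjv A.
Proof. exact: map_mxZ. Qed.

Lemma conjvK A : conjv (conjv A) = A.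
Proof. by apply/matrixP => j k; rewrite !mxE conjcK. Qed.

Lemma conjvM p A (A' : 'M[C]_(n, p)) : conjv (A *m A') = conjv A *m conjv A'.
Proof. exact: map_mxM. Qed.

Lemma conjv_ratr (A : 'M[rat]_(m, n)) : conjv (map_mx (@ratr C) A) = map_mx ratr A.
Proof. by apply/matrixP => j k; rewrite !mxE (fmorph_rat conjc). Qed.

End Conjugation.

Lemma conj_bil (R : rcfType) d (M : 'M[R[i]]_d) u v :
  (bil M u v)^* = bil (conjv M) (conjv u) (conjv v).
Proof. by rewrite /bil /conjv map_trmx -!map_mxM [in RHS]mxE. Qed.

Lemma signz_sqr (C : numDomainType) (z : int) : (-1 : C) ^ z * (-1) ^ z = 1.
Proof. by rewrite expN1r -exprMn mulrNN mulr1 expr1n. Qed.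

Lemma signz_even (C : numDomainType) (z : int) : ~~ odd `|z|%N -> (-1 : C) ^ z = 1.
Proof. by move=> z_even; rewrite expN1r -signr_odd (negbTE z_even). Qed.

Lemma conj_signz (R : rcfType) (z : int) : ((-1 : R[i]) ^ z)^* = (-1) ^ z.
Proof. by rewrite expN1r rmorph_sign. Qed.

Lemma half_double (C : numFieldType) (x : C) : 2^-1 * (x + x) = x.
Proof. by rewrite mulrC mulrDl -splitr. Qed.

Lemma pitilde_decomp (R : rcfType) d (n : int) (y : 'rV[R[i]]_d) :
  y = pitilde n y + imC R *: pitilde n (- imC R *: y).
Proof.
have ii : imC R * imC R = -1 by rewrite -expr2 sqr_i.
have ci : (- imC R)^* = imC R by apply/eqP; rewrite eq_complex /= oppr0 opprK !eqxx.
rewrite /pitilde conjvZ ci; apply/rowP => j; rewrite !mxE.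
set e := (-1) ^ (n - 1); set I := imC R; set a := y 0 j; set b := (y 0 j)^*.
have -> : 2^-1 * (a + e * b) + I * (2^-1 * (- I * a + e * (I * b)))
        = 2^-1 * (a * (1 - I * I)) + 2^-1 * e * b * (1 + I * I) by ring.
by rewrite ii opprK addrN mulr0 addr0 mulrDr mulr1 half_double.
Qed.

Section HodgeTypes.
Variables (K : fieldType) (d : nat) (hp : 'I_d -> int) (B : 'M[K]_d).
Hypothesis B_unit : B \in unitmx.
Implicit Types (S : pred int) (u v : 'rV[K]_d).

Definition hcoord u k := (u *m invmx B) 0 k.

Definition supported S u := [forall (k | ~~ S (hp k)), hcoord u k == 0].

Definition hspan S := \matrix_k (if S (hp k) then row k B else 0).

Definition hproj S u := \sum_k (if S (hp k) then hcoord u k else 0) *: row k B.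

Lemma supportedP S u :
  reflect (forall k, ~~ S (hp k) -> hcoord u k = 0) (supported S u).
Proof. by apply: (iffP forall_inP) => uS k /uS /eqP. Qed.

Lemma hcoord_row l k : hcoord (row l B) k = (l == k)%:R.
Proof. by rewrite /hcoord -row_mul mulmxV // !mxE. Qed.

Lemma hcoord_expand u : u = \sum_k hcoord u k *: row k B.
Proof. by rewrite -[LHS](mulmxKV B_unit) mulmx_sum_row. Qed.

Lemma hcoord0 k : hcoord 0 k = 0.
Proof. by rewrite /hcoord mul0mx mxE. Qed.

Lemma hcoordD u v k : hcoord (u + v) k = hcoord u k + hcoord v k.
Proof. by rewrite /hcoord mulmxDl mxE. Qed.

Lemma hcoordB u v k : hcoord (u - v) k = hcoord u k - hcoord v k.
Proof. by rewrite /hcoord mulmxBl !mxE. Qed.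

Lemma hcoordZ a u k : hcoord (a *: u) k = a * hcoord u k.
Proof. by rewrite /hcoord -scalemxAl mxE. Qed.

Lemma hcoord_sum (I : Type) (r : seq I) (P : pred I) (f : I -> 'rV[K]_d) k :
  hcoord (\sum_(j <- r | P j) f j) k = \sum_(j <- r | P j) hcoord (f j) k.
Proof. by elim/big_rec2: _ => [|j x y _ <-]; rewrite ?hcoord0 ?hcoordD. Qed.

Lemma supportedD S u v : supported S u -> supported S v -> supported S (u + v).
Proof.
by move=> /supportedP Su /supportedP Sv; apply/supportedP => k Sk; rewrite hcoordD Su ?Sv ?addr0.
Qed.

Lemma supportedZ S a u : supported S u -> supported S (a *: u).
Proof. by move=> /supportedP Su; apply/supportedP => k Sk; rewrite hcoordZ Su ?mulr0. Qed.

Lemma supported_sub S S' u : {subset S <= S'} -> supported S u -> supported S' u.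
Proof.
move=> SS' /supportedP Su; apply/supportedP => k S'k.
by apply: Su; apply: contra S'k; apply: SS'.
Qed.

Lemma supported_row l : supported (pred1 (hp l)) (row l B).
Proof. by apply/supportedP => k; rewrite hcoord_row; case: eqP => // <-; rewrite /= eqxx. Qed.

Lemma supported_disjoint_eq0 S S' u :
  (forall a, S a -> S' a -> False) -> supported S u -> supported S' u -> u = 0.
Proof.
move=> SS' /supportedP Su /supportedP S'u; rewrite (hcoord_expand u) big1 // => k _.
case Sk: (S (hp k)); last by rewrite Su ?Sk ?scale0r.
by rewrite S'u ?scale0r //; apply/negP; apply: SS' Sk.
Qed.

Lemma hcoord_hproj S u k : hcoord (hproj S u) k = if S (hp k) then hcoord u k else 0.
Proof.
rewrite hcoord_sum (bigD1 k) //= hcoordZ hcoord_row eqxx mulr1 big1 ?addr0 //.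
by move=> l lk; rewrite hcoordZ hcoord_row (negbTE lk) mulr0.
Qed.

Lemma supported_hproj S u : supported S (hproj S u).
Proof. by apply/supportedP => k nSk; rewrite hcoord_hproj (negbTE nSk). Qed.

Lemma supported_hproj_compl S u : supported (predC S) (u - hproj S u).
Proof. by apply/supportedP => k /negPn Sk; rewrite hcoordB hcoord_hproj Sk subrr. Qed.

Lemma sub_hspanE S u : (u <= hspan S)%MS = supported S u.
Proof.
apply/idP/idP => [/submxP[a ->] | /supportedP Su].
  rewrite mulmx_sum_row; apply/supportedP => k nSk; rewrite hcoord_sum big1 // => l _.
  rewrite hcoordZ rowK; case: ifP => [Sl | _]; last by rewrite hcoord0 mulr0.
  rewrite hcoord_row; case: eqP => [lk | _]; last by rewrite mulr0n mulr0.
  by rewrite -lk Sl in nSk.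
rewrite (hcoord_expand u); apply: summx_sub => k _.
case Sk: (S (hp k)); last by rewrite Su ?Sk // scale0r sub0mx.
by apply: scalemx_sub; have := row_sub k (hspan S); rewrite rowK Sk.
Qed.

Lemma hspanS S S' : {subset S <= S'} -> (hspan S <= hspan S')%MS.
Proof.
move=> SS'; apply/row_subP => l; rewrite sub_hspanE.
by apply: supported_sub SS' _; rewrite -sub_hspanE row_sub.
Qed.

Lemma Vpq_hspan p : Vpq hp B p = hspan (pred1 p).
Proof. by []. Qed.

Lemma Fil_hspan p : Fil hp B p = hspan (fun a => p <= a).
Proof. by []. Qed.

Lemma Vpq_supportedE p u : (u <= Vpq hp B p)%MS = supported (pred1 p) u.
Proof. exact: sub_hspanE. Qed.

Lemma Fil_supportedE p u : (u <= Fil hp B p)%MS = supported (fun a => p <= a) u.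
Proof. exact: sub_hspanE. Qed.

Lemma row_Vpq k : (row k B <= Vpq hp B (hp k))%MS.
Proof. by rewrite Vpq_supportedE supported_row. Qed.

Lemma Vpq_Fil p q : q <= p -> (Vpq hp B p <= Fil hp B q)%MS.
Proof.
by move=> qp; rewrite Vpq_hspan Fil_hspan; apply: hspanS => a /eqP ->; rewrite unfold_in.
Qed.

Lemma supported_Vpq_swap (i : int) (A : 'M[K]_d) S u :
  (forall p, (Vpq hp B p *m A <= Vpq hp B (i - p))%MS) ->
  supported S u -> supported (fun b => S (i - b)) (u *m A).
Proof.
rewrite -!sub_hspanE => A_swap /(submxMr A) uA; apply: submx_trans uA _.
apply/row_subP => k; rewrite row_mul rowK; case: ifP => Sk; last by rewrite mul0mx sub0mx.
apply: submx_trans (submxMr A (row_Vpq k)) _; apply: submx_trans (A_swap _) _.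
by rewrite Vpq_hspan; apply: hspanS => b /eqP ->; rewrite unfold_in /= opprB addrC subrK.
Qed.

End HodgeTypes.

Section HodgeOrthogonality.
Variables (K : fieldType) (d : nat) (i : int) (hp : 'I_d -> int) (B M : 'M[K]_d).
Hypothesis B_unit : B \in unitmx.
Hypothesis M_hodge : forall k l, hp k + hp l != i -> bil M (row k B) (row l B) = 0.
Implicit Types (S : pred int) (u v : 'rV[K]_d).

Lemma bil_supported_eq0 S1 S2 u v :
  (forall a b, S1 a -> S2 b -> a + b != i) ->
  supported hp B S1 u -> supported hp B S2 v -> bil M u v = 0.
Proof.
move=> S12 /supportedP S1u /supportedP S2v.
rewrite (hcoord_expand B_unit u) (hcoord_expand B_unit v) bil_suml big1 // => k _.
rewrite bil_sumr big1 // => l _; rewrite bilZl bilZr.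
case S1k: (S1 (hp k)); last by rewrite S1u ?S1k // mul0r.
case S2l: (S2 (hp l)); last by rewrite S2v ?S2l // mul0r mulr0.
by rewrite M_hodge ?mulr0 // S12.
Qed.

Hypothesis M_nondeg : forall u, (forall v, bil M u v = 0) -> u = 0.

Lemma bil_rows_eq0 u : (forall l, bil M u (row l B) = 0) -> u = 0.
Proof.
move=> uB; apply: M_nondeg => v; rewrite (hcoord_expand B_unit v) bil_sumr.
by rewrite big1 // => l _; rewrite bilZr uB mulr0.
Qed.

Lemma supported_orth S u :
  (forall l, S (hp l) -> bil M u (row l B) = 0) ->
  supported hp B (fun a => ~~ S (i - a)) u.
Proof.
move=> uS; pose T a := S (i - a).
have dual a b : a + b = i -> T a = S b by rewrite /T => <-; rewrite addrC addKr.
have proj0 : hproj hp B T u = 0.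
  apply: bil_rows_eq0 => l; have [Sl | nSl] := boolP (S (hp l)).
    have := uS l Sl; rewrite -[u in bil M u](subrK (hproj hp B T u)) bilDl.
    have compl := supported_hproj_compl hp B_unit T u.
    rewrite (bil_supported_eq0 _ compl (supported_row hp B_unit l)) ?add0r //.
    by move=> a b /negP Ta /eqP bl; apply/eqP => ab; apply: Ta; rewrite (dual _ _ ab) bl.
  apply: (bil_supported_eq0 _ (supported_hproj hp B_unit T u) (supported_row hp B_unit l)).
  by move=> a b Ta /eqP bl; apply/eqP => ab; move: nSl; rewrite -bl -(dual _ _ ab) Ta.
by rewrite -[u]subr0 -proj0; exact: supported_hproj_compl.
Qed.

End HodgeOrthogonality.

Lemma exists_unitary_nonroot (C : numClosedFieldType) (e : int) :
  e != 0 -> exists2 z : C, z * z^* = 1 & z ^ e != 1.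
Proof.
have nat_case N : (0 < N)%N -> exists2 z : C, z * z^* = 1 & z ^+ N != 1.
  move=> N_gt0; pose z := (N.*2).-root (-1 : C).
  have zN2 : z ^+ N.*2 = -1 by rewrite rootCK // double_gt0.
  have norm_z : `|z| = 1.
    by apply/eqP; rewrite -(@pexpr_eq1 _ _ N.*2) ?double_gt0 // -normrX zN2 normrN1.
  exists z; first by rewrite -normCK norm_z expr1n.
  apply/eqP => zN1; move: zN2; rewrite -addnn exprD zN1 mulr1 => /eqP.
  by rewrite -addr_eq0 -mulr2n pnatr_eq0.
case: e => N /= e_neq0.
  by apply: nat_case; case: N e_neq0.
by have [z zz zN] := nat_case N.+1 isT; exists z; rewrite // invr_eq1.
Qed.

Lemma hact_row (R : rcfType) d (i : int) (hp : 'I_d -> int) (B : 'M[R[i]]_d) z k :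
  B \in unitmx ->
  row k B *m hact i hp B z = (z ^ hp k * z^* ^ (i - hp k)) *: row k B.
Proof.
move=> B_unit; rewrite /hact -row_mul !mulmxA mulmxV // mul1mx mul_diag_mx.
by apply/rowP => j; rewrite !mxE.
Qed.

(* For |z| = 1 the action multiplies the pairing of V^{p,i-p} with V^{p',i-p'}
   by z^(2(p+p'-i)), and some such z is not a root of unity of that order. *)
Lemma hodge_orthogonal (R : rcfType) d (i : int) (hp : 'I_d -> int) (B M : 'M[R[i]]_d) :
  B \in unitmx ->
  (forall z, z != 0 -> forall u v,
     bil M (u *m hact i hp B z) (v *m hact i hp B z) = (z * z^*) ^ i * bil M u v) ->
  forall k l, hp k + hp l != i -> bil M (row k B) (row l B) = 0.
Proof.
move=> B_unit M_hact k l kl.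
have e_neq0 : 2 * (hp k + hp l - i) != 0 by lia.
have [z zz ze] := @exists_unitary_nonroot R[i] _ e_neq0.
have z0 : z != 0 by apply: contra_eq_neq zz => ->; rewrite mul0r eq_sym oner_eq0.
have zc : z^* = z^-1 by apply: (mulfI z0); rewrite mulfV.
have := M_hact z z0 (row k B) (row l B).
rewrite !hact_row // bilZl bilZr zz exp1rz mul1r mulrA zc !exprz_inv -!expfzDr //.
have -> : hp k + - (i - hp k) + (hp l + - (i - hp l)) = 2 * (hp k + hp l - i) by lia.
move/eqP; rewrite -subr_eq0 -{2}[bil _ _ _]mul1r -mulrBl mulf_eq0 subr_eq0.
by rewrite (negbTE ze) => /eqP.
Qed.

Section Pairing.
Variable R : rcfType.
Local Notation C := R[i].
Variables (d : nat) (i n : int) (hp : 'I_d -> int) (Fm B D Q : 'M[C]_d).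
Hypotheses (Fm_invol : Fm *m Fm = 1%:M) (Fm_real : conjv Fm = Fm).
Hypothesis B_unit : B \in unitmx.
Hypothesis Fm_Vpq : forall p, (Vpq hp B p *m Fm <= Vpq hp B (i - p))%MS.
Hypothesis D_real : forall k, conjv (row k D) *m Fm = row k D.
Hypothesis Fil_dR : exists X : 'M[rat]_d, (Fil hp B n :=: map_mx ratr X *m D)%MS.
Hypothesis Q_real : conjv Q = Q.
Hypothesis Q_nondeg : forall u, (forall v, bil Q u v = 0) -> u = 0.
Hypothesis Q_sym : forall u v, bil Q v u = (-1) ^ i * bil Q u v.
Hypothesis Q_Fm : forall u v, bil Q (u *m Fm) (v *m Fm) = bil Q u v.
Hypothesis Q_hodge : forall k l, hp k + hp l != i -> bil Q (row k B) (row l B) = 0.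
Implicit Types (u v w x y : 'rV[C]_d).

Local Notation eps := ((-1 : C) ^ (n - 1)).
Local Notation HB := (HBR n Fm).
Local Notation W := (Wsub hp B D n).
Local Notation pair u v := (bil Q u (conjv v)).

Definition eps_eigen y := y *m Fm = eps *: y.

Definition eps_proj x := 2^-1 *: (x + eps *: (x *m Fm)).

(* The types p such that V^{p,i-p} lies in neither F^n nor F_inf F^n. *)
Definition mid_type (a : int) := (i - n < a) && (a < n).

Lemma eps_sqr : eps * eps = 1.
Proof. exact: signz_sqr. Qed.

Lemma eps_eigenZ a y : eps_eigen y -> eps_eigen (a *: y).
Proof. by rewrite /eps_eigen -scalemxAl => ->; rewrite !scalerA mulrC. Qed.

Lemma bil_Fmr u v : bil Q u (v *m Fm) = bil Q (u *m Fm) v.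
Proof. by rewrite -[LHS]Q_Fm -mulmxA Fm_invol mulmx1. Qed.

Lemma bil_eps_eigenr u v : eps_eigen u -> bil Q u (v *m Fm) = eps * bil Q u v.
Proof. by move=> uF; rewrite bil_Fmr uF bilZl. Qed.

Lemma bil_eps_eigenl u v : eps_eigen v -> bil Q (u *m Fm) v = eps * bil Q u v.
Proof. by move=> vF; rewrite -bil_Fmr vF bilZr. Qed.

Lemma bil_eps_projr u v : eps_eigen u -> bil Q u (eps_proj v) = bil Q u v.
Proof.
by move=> uF; rewrite bilZr bilDr bilZr bil_eps_eigenr // mulrA eps_sqr mul1r half_double.
Qed.

Lemma bil_eps_projl u v : eps_eigen v -> bil Q (eps_proj u) v = bil Q u v.
Proof.
by move=> vF; rewrite bilZl bilDl bilZl bil_eps_eigenl // mulrA eps_sqr mul1r half_double.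
Qed.

Lemma eps_proj_eigen x : eps_eigen (eps_proj x).
Proof.
rewrite /eps_eigen /eps_proj -scalemxAl mulmxDl -scalemxAl -mulmxA Fm_invol mulmx1.
by rewrite scalerA mulrC -scalerA [in RHS]scalerDr [in RHS]scalerA eps_sqr scale1r addrC.
Qed.

Lemma conjv_pitilde y : conjv (pitilde n y) = eps *: pitilde n y.
Proof.
rewrite /pitilde conjvZ conjvD conjvZ conjvK conj_signz fmorphV rmorph_nat.
by rewrite scalerA mulrC -scalerA [in RHS]scalerDr [in RHS]scalerA eps_sqr scale1r addrC.
Qed.

Lemma pitilde_eps_eigen y : eps_eigen y -> eps_eigen (pitilde n y).
Proof.
move=> yF; have cyF : eps_eigen (conjv y).
  by rewrite /eps_eigen -Fm_real -conjvM yF conjvZ conj_signz.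
by rewrite /eps_eigen /pitilde -scalemxAl mulmxDl -scalemxAl yF cyF -scalerDr !scalerA mulrC.
Qed.

Lemma HBR_pitilde y : eps_eigen y -> HB (pitilde n y).
Proof. by move=> yF; split; [exact: conjv_pitilde | exact: pitilde_eps_eigen]. Qed.

Lemma pitilde_eps_proj x : conjv x = x *m Fm -> pitilde n x = eps_proj x.
Proof. by rewrite /pitilde => ->. Qed.

Lemma pairE u v : HB v -> pair u v = eps * bil Q u v.
Proof. by case=> -> _; rewrite bilZr. Qed.

Lemma bil_pairE u v : HB v -> bil Q u v = eps * pair u v.
Proof. by move=> hv; rewrite pairE // mulrA eps_sqr mul1r. Qed.

Lemma pair_real u v : HB u -> HB v -> pair u v \is Num.real.
Proof.
move=> [uc _] hv; apply/CrealP.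
by rewrite conj_bil Q_real conjvK uc bilZl -pairE.
Qed.

Lemma pair_sym u v : ~~ odd `|i|%N -> HB u -> HB v -> pair u v = pair v u.
Proof.
by move=> i_even hu hv; rewrite (pairE u hv) (pairE v hu) Q_sym (signz_even _ i_even) mul1r.
Qed.

Lemma bil_pitilde_eq0 u y :
  bil Q u (pitilde n y) = 0 -> bil Q u (pitilde n (- imC R *: y)) = 0 -> bil Q u y = 0.
Proof.
move=> re im; rewrite {1}(pitilde_decomp n y) bilDr (bilZr Q (imC R)).
by rewrite [X in X + _]re [X in _ * X]im mulr0 addr0.
Qed.

Lemma HB_nondeg u : HB u -> (forall v, HB v -> pair u v = 0) -> u = 0.
Proof.
move=> [_ uF] uHB; apply: Q_nondeg => w.
have orth y : eps_eigen y -> bil Q u (pitilde n y) = 0.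
  by move=> /HBR_pitilde hy; rewrite bil_pairE // uHB // mulr0.
rewrite -bil_eps_projr //; have wF := eps_proj_eigen w.
by apply: bil_pitilde_eq0; apply: orth; last apply: eps_eigenZ.
Qed.

Lemma VdR_conj w : VdR D w -> conjv w = w *m Fm.
Proof.
case=> y ->; have DF : conjv D *m Fm = D.
  by apply/row_matrixP => k; rewrite row_mul -[RHS]D_real /conjv map_row.
by rewrite conjvM conjv_ratr -[in RHS]DF -!mulmxA Fm_invol mulmx1.
Qed.

Lemma FdRR_Fil x : FdRR hp B D n x -> (x <= Fil hp B n)%MS /\ conjv x = x *m Fm.
Proof.
case=> m [r [w [Hw ->]]]; split.
  by apply: summx_sub => k _; apply: scalemx_sub; case: (Hw k).
rewrite /conjv map_mx_sum mulmx_suml; apply: eq_bigr => k _.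
rewrite map_mxZ -scalemxAl -/(conjv (w k)) VdR_conj; last by case: (Hw k).
by rewrite /= oppr0.
Qed.

Lemma W_eps_proj v : W v -> exists2 x, (x <= Fil hp B n)%MS & v = eps_proj x.
Proof. by case=> x [/FdRR_Fil[xF xc] ->]; exists x; last exact: pitilde_eps_proj. Qed.

Lemma W_HB v : W v -> HB v.
Proof.
case=> x [/FdRR_Fil[_ xc] ->]; split; first exact: conjv_pitilde.
by rewrite (pitilde_eps_proj xc); apply: eps_proj_eigen.
Qed.

Lemma orth_W_Fil u : eps_eigen u -> (forall w, W w -> pair u w = 0) ->
  forall x, (x <= Fil hp B n)%MS -> bil Q u x = 0.
Proof.
move=> uF uW x; have [X FilX] := Fil_dR; rewrite FilX => /submxP[a ->].
rewrite mulmx_sum_row bil_sumr big1 // => k _; rewrite bilZr.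
set y := row k _; have yF : (y <= Fil hp B n)%MS by rewrite FilX row_sub.
have ydR : VdR D y by exists (row k X); rewrite /y row_mul map_row.
have Wy : W (eps_proj y).
  rewrite -(pitilde_eps_proj (VdR_conj ydR)); exists y; split => //.
  exists 1%N, (fun _ => 1), (fun _ => y); split => //.
  by rewrite big_ord1 scale1r.
by rewrite -(bil_eps_projr _ uF) (bil_pairE _ (W_HB Wy)) uW // !mulr0.
Qed.

Lemma orth_Fil_supported_mid u : eps_eigen u ->
  (forall x, (x <= Fil hp B n)%MS -> bil Q u x = 0) -> supported hp B mid_type u.
Proof.
move=> uF uFil.
apply: supported_sub (supported_orth (S := predC mid_type) B_unit Q_hodge Q_nondeg _).
  by move=> a; rewrite !unfold_in /= negbK /mid_type; lia.
move=> l; rewrite /= /mid_type => l_out; have [l_hi | l_lo] := lerP n (hp l).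
  by apply: uFil; apply: submx_trans (row_Vpq hp B_unit l) (Vpq_Fil hp B_unit l_hi).
rewrite -[bil _ _ _]mul1r -eps_sqr -mulrA -bil_eps_eigenr // uFil ?mulr0 //.
apply: submx_trans (submxMr Fm (row_Vpq hp B_unit l)) _; apply: submx_trans (Fm_Vpq _) _.
by apply: (Vpq_Fil hp B_unit); lia.
Qed.

Lemma Wperp_supported_mid u :
  HB u -> (forall w, W w -> pair u w = 0) -> supported hp B mid_type u.
Proof. by move=> [_ uF] uW; apply: orth_Fil_supported_mid (orth_W_Fil uF uW). Qed.

Lemma W_supported v : W v -> supported hp B (predC mid_type) v.
Proof.
case/W_eps_proj => x; rewrite (Fil_supportedE hp B_unit) => xF ->.
apply: supportedZ; apply: supportedD.
  by apply: supported_sub xF => a; rewrite !unfold_in /= /mid_type; lia.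
apply: supportedZ; apply: supported_sub (supported_Vpq_swap B_unit Fm_Vpq xF).
by move=> a; rewrite !unfold_in /= /mid_type; lia.
Qed.

Lemma W_nondeg u : W u -> (forall v, W v -> pair u v = 0) -> u = 0.
Proof.
move=> Wu uW; have umid := Wperp_supported_mid (W_HB Wu) uW.
apply: (supported_disjoint_eq0 B_unit _ umid (W_supported Wu)).
by move=> a a_mid; rewrite /= a_mid.
Qed.

Lemma pitilde_orth_W y : eps_eigen y -> (forall w, W w -> bil Q y w = 0) ->
  HB (pitilde n y) /\ (forall w, W w -> pair (pitilde n y) w = 0).
Proof.
move=> yF yW; split=> [|w Ww]; first exact: HBR_pitilde.
have hw := W_HB Ww.
have cyW : bil Q (conjv y) w = 0.
  by rewrite -[w]conjvK -{1}Q_real -conj_bil pairE // yW // mulr0 rmorph0.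
by rewrite pairE // /pitilde bilZl bilDl bilZl yW // cyW !(mulr0, addr0).
Qed.

Lemma Wperp_nondeg u : HB u -> (forall w, W w -> pair u w = 0) ->
  (forall v, HB v /\ (forall w, W w -> pair v w = 0) -> pair u v = 0) -> u = 0.
Proof.
move=> hu uW uWperp; have umid := Wperp_supported_mid hu uW.
apply: (bil_rows_eq0 B_unit Q_nondeg) => l.
have [l_mid | l_out] := boolP (mid_type (hp l)); last first.
  apply: (bil_supported_eq0 B_unit Q_hodge _ umid (supported_row hp B_unit l)).
  by move=> a b a_mid /eqP ->; move: a_mid l_out; rewrite /mid_type; lia.
have yW w : W w -> bil Q (eps_proj (row l B)) w = 0.
  move=> Ww; rewrite bil_eps_projl; last exact: (W_HB Ww).2.
  apply: (bil_supported_eq0 B_unit Q_hodge _ (supported_row hp B_unit l) (W_supported Ww)).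
  by move=> a b /eqP -> b_out; move: l_mid b_out; rewrite /= /mid_type; lia.
have orth y : eps_eigen y -> (forall w, W w -> bil Q y w = 0) -> bil Q u (pitilde n y) = 0.
  move=> yF /(pitilde_orth_W yF)[hy yperp].
  by rewrite bil_pairE // uWperp // mulr0.
rewrite -bil_eps_projr; last exact: hu.2.
have yF := eps_proj_eigen (row l B).
apply: bil_pitilde_eq0; apply: orth; [exact: yF | exact: yW | exact: eps_eigenZ yF |].
by move=> w Ww; rewrite bilZl yW ?mulr0.
Qed.

Lemma Wperp_pos u : i = 2 * n - 2 ->
  (forall p v, (v <= Vpq hp B p)%MS -> v != 0 -> 0 < imC R ^ (p - (i - p)) * pair v v) ->
  HB u -> (forall w, W w -> pair u w = 0) -> u != 0 -> 0 < pair u u.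
Proof.
move=> i2 pol hu uW u0; have := pol (n - 1) u _ u0.
have -> : n - 1 - (i - (n - 1)) = 0 by lia.
rewrite expr0z mul1r; apply; rewrite (Vpq_supportedE hp B_unit).
apply: supported_sub (Wperp_supported_mid hu uW) => a.
by rewrite !unfold_in /= /mid_type => a_mid; apply/eqP; lia.
Qed.

End Pairing.

Lemma ratr_matrix (R : rcfType) m n (A : 'M[R[i]]_(m, n)) :
  (forall j k, RatC (A j k)) -> exists A0 : 'M[rat]_(m, n), A = map_mx ratr A0.
Proof.
move=> Arat; have [f fE] := fin_all_exists (fun jk : 'I_m * 'I_n => Arat jk.1 jk.2).
by exists (\matrix_(j, k) f (j, k)); apply/matrixP => j k; rewrite !mxE (fE (j, k)).
Qed.

Lemma tpi_neq0 (R : realType) : tpi R != 0.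
Proof.
rewrite /tpi mulf_eq0 negb_or; apply/andP; split.
  rewrite -(rmorph0 (@real_complex R)) (inj_eq (@complexI R)) mulf_eq0 negb_or.
  by rewrite pnatr_eq0 /= gt_eqF // pi_gt0.
by rewrite eq_complex /= negb_and oner_eq0 orbT.
Qed.

Lemma rational_form_real_nondeg (R : realType) d (i : int) (Sm : 'M[R[i]]_d) :
  (forall j k, RatC (tpi R ^ i * Sm j k)) ->
  (forall u : 'rV[rat]_d,
     (forall v, bil Sm (map_mx ratr u) (map_mx ratr v) = 0) -> u = 0) ->
  conjv (tpi R ^ i *: Sm) = tpi R ^ i *: Sm /\
  forall u, (forall v, bil (tpi R ^ i *: Sm) u v = 0) -> u = 0.
Proof.
move=> Srat Snondeg.
have [Q0 Q0E] : exists Q0 : 'M[rat]_d, tpi R ^ i *: Sm = map_mx ratr Q0.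
  by apply: ratr_matrix => j k; rewrite mxE.
have Q0_unit : Q0 \in unitmx.
  apply: bil_nondegenerate_unitmx => u uQ0; apply: Snondeg => v.
  have : bil (map_mx ratr Q0) (map_mx ratr u) (map_mx ratr v) = 0 :> R[i].
    by rewrite -bil_map uQ0 rmorph0.
  rewrite -Q0E bilZm => /eqP.
  by rewrite mulf_eq0 expfz_eq0 (negbTE (tpi_neq0 R)) andbF /= => /eqP.
rewrite Q0E conjv_ratr; split=> // u.
by apply: unitmx_bil_nondegenerate; rewrite map_unitmx.
Qed.

Theorem proposition2p3 (R : realType) (d : nat) (i n : int)
  (F : 'M[rat]_d) (B D Sm : 'M[R[i]]_d) (hp : 'I_d -> int) :
  (i <= 2 * n - 1)%R ->
  (* F_inf : a Q-linear involution of V = Q^d *)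
  F *m F = 1%:M ->
  (* Hodge decomposition of V_C = C^d (adapted basis B, row k of type (hp k, i - hp k)) *)
  B \in unitmx ->
  (forall p : int, (conjv (Vpq hp B p) :=: Vpq hp B (i - p))%MS) ->
  (forall p : int, (Vpq hp B p *m map_mx ratr F :=: Vpq hp B (i - p))%MS) ->
  (* de Rham structure: the Q-span of the rows of D, with V_dR (x) C = V_C,
     and c_dR = F_inf c_B fixing H_dR(M) *)
  D \in unitmx ->
  (forall k : 'I_d, conjv (row k D) *m map_mx ratr F = row k D) ->
  (* the Hodge filtration is defined over H_dR(M) *)
  (forall p : int, exists X : 'M[rat]_d, (Fil hp B p :=: map_mx ratr X *m D)%MS) ->
  (* S : V x V -> (2 pi i)^(-i) Q, given by its Gram matrix Sm *)
  (forall j k : 'I_d, RatC (tpi R ^ i * Sm j k)) ->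
  (* nondegenerate on V *)
  (forall u : 'rV[rat]_d,
      (forall v : 'rV[rat]_d, bil Sm (map_mx ratr u) (map_mx ratr v) = 0) -> u = 0) ->
  (* (-1)^i-symmetric *)
  (forall u v : 'rV[R[i]]_d, bil Sm v u = (-1) ^ i * bil Sm u v) ->
  (* F_inf-invariant *)
  (forall u v : 'rV[R[i]]_d,
      bil Sm (u *m map_mx ratr F) (v *m map_mx ratr F) = bil Sm u v) ->
  (* C^x-invariant (C^x acting on the target (2 pi i)^(-i) Q = Q(-i) by (z zbar)^i) *)
  (forall z : R[i], z != 0 -> forall u v : 'rV[R[i]]_d,
      bil Sm (u *m hact i hp B z) (v *m hact i hp B z) = (z * z^*) ^ i * bil Sm u v) ->
  (* Q-valued on H_dR(M) *)
  (forall u v : 'rV[R[i]]_d, VdR D u -> VdR D v -> RatC (bil Sm u v)) ->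
  let Qm := tpi R ^ i *: Sm in
  let pair := fun u v : 'rV[R[i]]_d => bil Qm u (conjv v) in
  let HB := HBR n (map_mx ratr F) in
  let W := Wsub hp B D n in
  let Wperp := fun u => HB u /\ (forall w, W w -> pair u w = 0) in
  (* (1) *)
  (forall u v, HB u -> HB v -> pair u v \is Num.real) /\
  (* (2) *)
  (~~ odd (absz i) ->
     (forall u v, HB u -> HB v -> pair u v = pair v u) /\
     (forall u, HB u -> (forall v, HB v -> pair u v = 0) -> u = 0) /\
     (forall u, W u -> (forall v, W v -> pair u v = 0) -> u = 0) /\
     (forall u, Wperp u -> (forall v, Wperp v -> pair u v = 0) -> u = 0)) /\
  (* (3) *)
  (i = 2 * n - 2 ->
   (forall (p : int) (u : 'rV[R[i]]_d), (u <= Vpq hp B p)%MS -> u != 0 ->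
      0 < imC R ^ (p - (i - p)) * bil Qm u (conjv u)) ->
     (forall u v, Wperp u -> Wperp v -> pair u v = pair v u) /\
     (forall u, Wperp u -> u != 0 -> 0 < pair u u)).
Proof.
(* Not needed: i <= 2n - 1, c_B V^{p,q} = V^{q,p}, D \in unitmx, and S rational on H_dR. *)
move=> _ FF B_unit _ F_Vpq _ D_real Fil_dR S_rat S_nondeg S_sym S_F S_hact _.
move=> Qm pair HB W Wperp; pose Fm : 'M[R[i]]_d := map_mx ratr F.
have Fm_invol : Fm *m Fm = 1%:M by rewrite -map_mxM FF map_mx1.
have Fm_real : conjv Fm = Fm := conjv_ratr R F.
have Fm_Vpq p : (Vpq hp B p *m Fm <= Vpq hp B (i - p))%MS by rewrite /Fm F_Vpq.
have Fil_n := Fil_dR n.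
have [Q_real Q_nondeg] := rational_form_real_nondeg S_rat S_nondeg.
have Q_sym u v : bil Qm v u = (-1) ^ i * bil Qm u v by rewrite /Qm !bilZm S_sym [LHS]mulrCA.
have Q_Fm u v : bil Qm (u *m Fm) (v *m Fm) = bil Qm u v by rewrite /Qm !bilZm S_F.
have Q_hodge k l : hp k + hp l != i -> bil Qm (row k B) (row l B) = 0.
  by move=> kl; rewrite /Qm bilZm (hodge_orthogonal B_unit S_hact kl) mulr0.
split; [|split].
- by move=> u v; apply: (pair_real Q_real).
- move=> i_even; split; [|split; [|split]].
  + by move=> u v; apply: (pair_sym Q_sym).
  + by move=> u; apply: (HB_nondeg Fm_invol Fm_real Q_nondeg Q_Fm).
  + move=> u; exact: (W_nondeg Fm_invol B_unit Fm_Vpq D_real Fil_n Q_nondeg Q_Fm Q_hodge).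
  + move=> u [hu uW]; exact: (Wperp_nondeg Fm_invol Fm_real B_unit Fm_Vpq D_real Fil_n
                                Q_real Q_nondeg Q_Fm Q_hodge hu uW).
- move=> i2 pol; have i_even : ~~ odd `|i|%N.
    by rewrite (_ : i = 2 * (n - 1)) ?abszM ?oddM //; lia.
  split; first by move=> u v [hu _] [hv _]; exact: (pair_sym Q_sym i_even hu hv).
  move=> u [hu uW]; exact: (Wperp_pos Fm_invol B_unit Fm_Vpq D_real Fil_n
                              Q_nondeg Q_Fm Q_hodge i2 pol hu uW).
Qed.
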